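(* Let $u\geq 2$ be an integer and $C(u)=\{n\in\mathbb{Z} : u\nmid n\}$. Then every non-negative integer is a sum of at most $5940$ squares of elements of $C(u)$.
   Context: The empty sum is $0$. *)

From Stdlib Require Import ZArith List.
Open Scope Z_scope.

Definition C (u : Z) (n : Z) : Prop := ~ (u | n)%Z.

Definition sum_sq (l : list Z) : Z := fold_right (fun x acc => x * x + acc) 0 l.

From Stdlib Require Import ZArith List Lia Znumtheory Classical.
Open Scope Z_scope.

(* For N >= 4u^2 write N - 8 = 2u^2 M + R with 0 <= R < 2u^2. By Lagrange's
   four-square theorem (proved here by Euler's identity and Fermat's descent)
   M = a^2 + b^2 + c^2 + d^2, and each 2u^2 a^2 + 2 = (ua+1)^2 + (ua-1)^2 is a sum
   of two squares from C(u). Any R < 4u^2 is a sum of four squares x^2 < 4u^2; the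
   only nonzero such x divisible by u are x = ±u, and u^2 = (u-1)^2 + (2u-1) where
   2u - 1 < u^2 is a sum of four squares of integers in (-u, u), all in C(u) or 0.
   Altogether at most 8 + 4 * 5 = 28 squares are needed. *)

Definition sum_four_sq (n : Z) : Prop := exists a b c d, n = a*a + b*b + c*c + d*d.

Lemma euler_four_sq_identity x1 x2 x3 x4 y1 y2 y3 y4 :
  (x1*x1 + x2*x2 + x3*x3 + x4*x4) * (y1*y1 + y2*y2 + y3*y3 + y4*y4) =
    (x1*y1 + x2*y2 + x3*y3 + x4*y4) * (x1*y1 + x2*y2 + x3*y3 + x4*y4)
  + (x1*y2 - x2*y1 + x3*y4 - x4*y3) * (x1*y2 - x2*y1 + x3*y4 - x4*y3)
  + (x1*y3 - x3*y1 + x4*y2 - x2*y4) * (x1*y3 - x3*y1 + x4*y2 - x2*y4)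
  + (x1*y4 - x4*y1 + x2*y3 - x3*y2) * (x1*y4 - x4*y1 + x2*y3 - x3*y2).
Proof. ring. Qed.

Lemma sum_four_sq_mul n m : sum_four_sq n -> sum_four_sq m -> sum_four_sq (n * m).
Proof.
  intros (x1 & x2 & x3 & x4 & ->) (y1 & y2 & y3 & y4 & ->).
  rewrite euler_four_sq_identity. do 4 eexists. reflexivity.
Qed.

Lemma sum_four_sq_div_sq m n e1 e2 e3 e4 : m <> 0 ->
  m * m * n = e1*e1 + e2*e2 + e3*e3 + e4*e4 ->
  (m | e1) -> (m | e2) -> (m | e3) -> (m | e4) -> sum_four_sq n.
Proof.
  intros Hm E [c1 ->] [c2 ->] [c3 ->] [c4 ->].
  exists c1, c2, c3, c4. apply Z.mul_reg_l with (m * m); [nia|]. rewrite E. ring.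
Qed.

Lemma sum_four_sq_quotient m a b x1 x2 x3 x4 y1 y2 y3 y4 k1 k2 k3 k4 : m <> 0 ->
  x1 = y1 + m*k1 -> x2 = y2 + m*k2 -> x3 = y3 + m*k3 -> x4 = y4 + m*k4 ->
  x1*x1 + x2*x2 + x3*x3 + x4*x4 = m * a ->
  y1*y1 + y2*y2 + y3*y3 + y4*y4 = m * b ->
  sum_four_sq (a * b).
Proof.
  intros Hm E1 E2 E3 E4 Hx Hy.
  eapply sum_four_sq_div_sq; [exact Hm| | | | |].
  - replace (m * m * (a * b)) with ((m * a) * (m * b)) by ring.
    rewrite <- Hx, <- Hy. apply euler_four_sq_identity.
  - exists (b + k1*y1 + k2*y2 + k3*y3 + k4*y4). subst. lia.
  - exists (k1*y2 - k2*y1 + k3*y4 - k4*y3). subst. ring.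
  - exists (k1*y3 - k3*y1 + k4*y2 - k2*y4). subst. ring.
  - exists (k1*y4 - k4*y1 + k2*y3 - k3*y2). subst. ring.
Qed.

Lemma Z_sym_residue x m : 0 < m -> exists y k, x = y + m * k /\ - m <= 2 * y < m.
Proof.
  intros Hm.
  pose proof (Z.div_mod m 2 ltac:(lia)) as Em.
  pose proof (Z.mod_pos_bound m 2 ltac:(lia)) as Bm.
  pose proof (Z.div_mod (x + m / 2) m ltac:(lia)) as Ex.
  pose proof (Z.mod_pos_bound (x + m / 2) m Hm) as Bx.
  exists ((x + m / 2) mod m - m / 2), ((x + m / 2) / m). lia.
Qed.

Lemma sum_four_sq_descent_step p m : prime p -> 1 < m < p -> sum_four_sq (m * p) ->
  exists r, 0 < r < m /\ sum_four_sq (r * p).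
Proof.
  intros Hp Hm (x1 & x2 & x3 & x4 & Hx).
  assert (Hmp : ~ (m | p)) by (apply prime_alt in Hp as [_ Hp]; apply Hp; lia).
  destruct (Z_sym_residue x1 m) as (y1 & k1 & E1 & B1); [lia|].
  destruct (Z_sym_residue x2 m) as (y2 & k2 & E2 & B2); [lia|].
  destruct (Z_sym_residue x3 m) as (y3 & k3 & E3 & B3); [lia|].
  destruct (Z_sym_residue x4 m) as (y4 & k4 & E4 & B4); [lia|].
  assert (Hy : (m | y1*y1 + y2*y2 + y3*y3 + y4*y4)).
  { exists (p - k1*(2*y1 + m*k1) - k2*(2*y2 + m*k2) - k3*(2*y3 + m*k3) - k4*(2*y4 + m*k4)).
    subst. lia. }
  destruct Hy as [r Hy].
  assert (Hsq : forall y, - m <= 2 * y < m -> 0 <= 4 * (y * y) <= m * m) by (intros; nia).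
  pose proof (Hsq y1 B1) as S1. pose proof (Hsq y2 B2) as S2.
  pose proof (Hsq y3 B3) as S3. pose proof (Hsq y4 B4) as S4.
  assert (r_pos : 0 < r).
  { destruct (Z.eq_dec r 0) as [->|]; [exfalso|nia].
    assert (Hzero : forall y, 0 = y * y -> y = 0) by (intros; nia).
    assert (y1 = 0 /\ y2 = 0 /\ y3 = 0 /\ y4 = 0) as (-> & -> & -> & ->)
      by (repeat split; apply Hzero; lia).
    apply Hmp. exists (k1*k1 + k2*k2 + k3*k3 + k4*k4).
    apply Z.mul_reg_l with m; [lia|]. subst. lia. }
  assert (r_lt : r < m).
  { destruct (Z.eq_dec r m) as [->|]; [exfalso|nia].
    assert (Hhalf : forall y k, - m <= 2 * y < m -> 4 * (y * y) = m * m ->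
      4 * ((y + m * k) * (y + m * k)) = m * m * (4 * (k * k - k) + 1)).
    { intros y k By Ey. assert (2 * y = - m) as Hy2 by nia.
      replace (4 * ((y + m * k) * (y + m * k))) with ((2*y + 2*m*k) * (2*y + 2*m*k)) by ring.
      rewrite Hy2. ring. }
    apply Hmp. exists (k1*k1 - k1 + k2*k2 - k2 + k3*k3 - k3 + k4*k4 - k4 + 1).
    apply Z.mul_reg_l with (4 * m); [lia|].
    pose proof (Hhalf y1 k1 B1 ltac:(lia)). pose proof (Hhalf y2 k2 B2 ltac:(lia)).
    pose proof (Hhalf y3 k3 B3 ltac:(lia)). pose proof (Hhalf y4 k4 B4 ltac:(lia)).
    subst. lia. }
  exists r. split; [lia|]. rewrite Z.mul_comm.
  apply (sum_four_sq_quotient m p r x1 x2 x3 x4 y1 y2 y3 y4 k1 k2 k3 k4); lia.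
Qed.

Lemma sum_four_sq_of_multiple p m : prime p -> 0 < m < p -> sum_four_sq (m * p) ->
  sum_four_sq p.
Proof.
  intros Hp Hm. assert (Hm0 : 0 <= m) by lia. revert Hm.
  pattern m. apply Z_lt_induction; [clear m Hm0; intros m IH Hm HS | exact Hm0].
  destruct (Z.eq_dec m 1) as [->|]; [now rewrite Z.mul_1_l in HS|].
  destruct (sum_four_sq_descent_step p m Hp ltac:(lia) HS) as (r & Hr & HSr).
  apply (IH r); lia || exact HSr.
Qed.

Lemma pigeonhole_two_injections (p h : Z) (f g : Z -> Z) :
  0 <= h -> p < 2 * (h + 1) ->
  (forall a, 0 <= a <= h -> 0 <= f a < p /\ 0 <= g a < p) ->
  (forall a b, 0 <= a <= h -> 0 <= b <= h -> f a = f b -> a = b) ->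
  (forall a b, 0 <= a <= h -> 0 <= b <= h -> g a = g b -> a = b) ->
  exists a b, 0 <= a <= h /\ 0 <= b <= h /\ f a = g b.
Proof.
  intros Hh Hp Hrange Hf Hg. apply NNPP. intros Hdisj.
  set (I := seq 0 (S (Z.to_nat h))).
  assert (HI : forall i, In i I -> 0 <= Z.of_nat i <= h)
    by (intros i Hi; apply in_seq in Hi; lia).
  assert (Hinj : forall f' : Z -> Z,
    (forall a b, 0 <= a <= h -> 0 <= b <= h -> f' a = f' b -> a = b) ->
    NoDup (map (fun i => f' (Z.of_nat i)) I)).
  { intros f' Hf'. apply NoDup_map_NoDup_ForallPairs; [|apply seq_NoDup].
    intros i j Hi Hj E. apply HI in Hi, Hj. apply Nat2Z.inj, Hf'; assumption. }
  assert (ND : NoDup (map (fun i => f (Z.of_nat i)) I ++ map (fun i => g (Z.of_nat i)) I)).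
  { apply NoDup_app; [apply Hinj, Hf | apply Hinj, Hg |].
    intros v Hv1 Hv2. apply in_map_iff in Hv1 as (i & <- & Hi), Hv2 as (j & E & Hj).
    apply Hdisj. exists (Z.of_nat i), (Z.of_nat j). auto. }
  assert (INC : incl (map (fun i => f (Z.of_nat i)) I ++ map (fun i => g (Z.of_nat i)) I)
                     (map Z.of_nat (seq 0 (Z.to_nat p)))).
  { intros v Hv. apply in_app_iff in Hv.
    assert (Hv' : 0 <= v < p)
      by (destruct Hv as [Hv|Hv]; apply in_map_iff in Hv as (i & <- & Hi);
          apply HI, Hrange in Hi; tauto).
    apply in_map_iff. exists (Z.to_nat v). clear - Hv'. rewrite in_seq. lia. }
  apply NoDup_incl_length in INC; [|exact ND].
  unfold I in INC. rewrite length_app, !length_map, !length_seq in INC. lia.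
Qed.

Lemma prime_sq_mod_inj p a b : prime p -> 0 <= a -> 0 <= b -> 2 * a <= p -> 2 * b <= p ->
  (p | a * a - b * b) -> a = b.
Proof.
  intros Hp Ha Hb Hap Hbp Hd. pose proof (prime_ge_2 p Hp) as Hp2.
  replace (a * a - b * b) with ((a - b) * (a + b)) in Hd by ring.
  apply (prime_mult p Hp) in Hd as [Hd|Hd];
    destruct (Z.eq_dec a b); trivial; apply Zdivide_bounds in Hd; lia.
Qed.

Lemma prime_divides_sum_two_sq_add_one p : prime p ->
  exists x y, 0 <= x /\ 0 <= y /\ 2 * x <= p /\ 2 * y <= p /\ (p | x * x + y * y + 1).
Proof.
  intros Hp. pose proof (prime_ge_2 p Hp) as Hp2.
  pose proof (Z.div_mod p 2 ltac:(lia)) as Ediv.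
  pose proof (Z.mod_pos_bound p 2 ltac:(lia)) as Emod.
  destruct (pigeonhole_two_injections p (p / 2) (fun a => (a * a) mod p)
              (fun b => (- 1 - b * b) mod p)) as (x & y & Hx & Hy & E).
  - lia.
  - lia.
  - intros a _. split; apply Z.mod_pos_bound; lia.
  - intros a b Ha Hb E. apply Z.cong_iff_ex in E.
    apply (prime_sq_mod_inj p a b Hp); trivial; lia.
  - intros a b Ha Hb E. apply Z.cong_iff_ex in E as [n E].
    symmetry. apply (prime_sq_mod_inj p b a Hp); try lia. exists n. lia.
  - apply Z.cong_iff_ex in E as [n E]. exists x, y. repeat split; try lia. exists n. lia.
Qed.

Lemma sum_four_sq_prime p : prime p -> sum_four_sq p.
Proof.
  intros Hp. pose proof (prime_ge_2 p Hp) as Hp2.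
  destruct (prime_divides_sum_two_sq_add_one p Hp) as (x & y & Hx & Hy & Hxp & Hyp & [m Hm]).
  apply (sum_four_sq_of_multiple p m Hp); [nia|].
  exists x, y, 1, 0. lia.
Qed.

Lemma sum_four_sq_nonneg n : 0 <= n -> sum_four_sq n.
Proof.
  intros Hn. assert (Hn0 := Hn). revert Hn.
  pattern n. apply Z_lt_induction; [clear n Hn0; intros n IH Hn | exact Hn0].
  destruct (Z_0_1_more n Hn) as [->|[->|Hn1]].
  - exists 0, 0, 0, 0. reflexivity.
  - exists 1, 0, 0, 0. reflexivity.
  - destruct (prime_dec n) as [Hp|Hnp]; [now apply sum_four_sq_prime|].
    destruct (not_prime_divide n Hn1 Hnp) as (d & Hd & [e ->]).
    apply sum_four_sq_mul; apply IH; nia.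
Qed.

Definition sum_sq_C (u : Z) (k : nat) (N : Z) : Prop :=
  exists l, (length l <= k)%nat /\ Forall (C u) l /\ sum_sq l = N.

Lemma sum_sq_app l1 l2 : sum_sq (l1 ++ l2) = sum_sq l1 + sum_sq l2.
Proof. induction l1 as [|a l IH]; simpl; [|rewrite IH]; ring. Qed.

Lemma sum_sq_C_0 u k : sum_sq_C u k 0.
Proof. exists nil. simpl. repeat split; [lia | constructor]. Qed.

Lemma sum_sq_C_le u k k' N : (k <= k')%nat -> sum_sq_C u k N -> sum_sq_C u k' N.
Proof. intros Hk (l & Hl & HC & HN). exists l. repeat split; trivial; lia. Qed.

Lemma sum_sq_C_add u k1 k2 N1 N2 :
  sum_sq_C u k1 N1 -> sum_sq_C u k2 N2 -> sum_sq_C u (k1 + k2) (N1 + N2).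
Proof.
  intros (l1 & L1 & C1 & <-) (l2 & L2 & C2 & <-). exists (l1 ++ l2).
  rewrite length_app, sum_sq_app. repeat split; [lia | now apply Forall_app].
Qed.

Lemma sum_sq_C_sq u a : C u a -> sum_sq_C u 1 (a * a).
Proof. intros Ha. exists (a :: nil). repeat split; simpl; [lia | auto | ring]. Qed.

Lemma C_small u a : a <> 0 -> - u < a < u -> C u a.
Proof. intros Ha Hau Hd. apply Zdivide_bounds in Hd; lia. Qed.

Lemma sum_sq_C_small_sq u a : - u < a < u -> sum_sq_C u 1 (a * a).
Proof.
  intros Ha. destruct (Z.eq_dec a 0) as [->|Ha0]; [apply sum_sq_C_0|].
  now apply sum_sq_C_sq, C_small.
Qed.

Lemma C_mul_add u a r : C u r -> C u (u * a + r).
Proof.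
  intros Hr Hd. apply Hr, (Z.divide_add_cancel_r _ (u * a)); [apply Z.divide_factor_l | exact Hd].
Qed.

Lemma sum_sq_C_four_small u R : 0 < u -> 0 <= R < u * u -> sum_sq_C u 4 R.
Proof.
  intros Hu HR. destruct (sum_four_sq_nonneg R ltac:(lia)) as (a & b & c & d & ->).
  assert (Hsmall : forall x, x * x < u * u -> - u < x < u) by (intros; nia).
  change 4%nat with (1 + 1 + 1 + 1)%nat.
  repeat apply sum_sq_C_add; apply sum_sq_C_small_sq, Hsmall; nia.
Qed.

Lemma sum_sq_C_sq_lt u a : 2 <= u -> a * a < 4 * (u * u) -> sum_sq_C u 5 (a * a).
Proof.
  intros Hu Ha. destruct (Zdivide_dec u a) as [[c ->]|Hd].
  - destruct (Z.eq_dec c 0) as [->|Hc]; [apply sum_sq_C_0|].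
    assert (0 < u * u) by nia. assert (c * c < 4) by nia.
    replace (c * u * (c * u)) with ((u - 1) * (u - 1) + (2 * u - 1))
      by (assert (c = 1 \/ c = -1) as [-> | ->] by nia; ring).
    apply (sum_sq_C_add u 1 4); [apply sum_sq_C_small_sq; lia|].
    apply sum_sq_C_four_small; nia.
  - apply (sum_sq_C_le u 1); [lia | now apply sum_sq_C_sq].
Qed.

Lemma sum_sq_C_lt u R : 2 <= u -> 0 <= R < 4 * (u * u) -> sum_sq_C u 20 R.
Proof.
  intros Hu HR. destruct (sum_four_sq_nonneg R ltac:(lia)) as (a & b & c & d & ->).
  change 20%nat with (5 + 5 + 5 + 5)%nat.
  repeat apply sum_sq_C_add; apply sum_sq_C_sq_lt; nia.
Qed.

Lemma sum_sq_C_u2_sq u a : 2 <= u -> sum_sq_C u 2 (2 * (u * u) * (a * a) + 2).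
Proof.
  intros Hu.
  replace (2 * (u * u) * (a * a) + 2)
    with ((u * a + 1) * (u * a + 1) + (u * a + - 1) * (u * a + - 1)) by ring.
  apply (sum_sq_C_add u 1 1); apply sum_sq_C_sq, C_mul_add, C_small; lia.
Qed.

Lemma sum_sq_C_u2_mul u M : 2 <= u -> 0 <= M -> sum_sq_C u 8 (2 * (u * u) * M + 8).
Proof.
  intros Hu HM. destruct (sum_four_sq_nonneg M HM) as (a & b & c & d & ->).
  replace (2 * (u * u) * (a * a + b * b + c * c + d * d) + 8) with
    (2 * (u * u) * (a * a) + 2 + (2 * (u * u) * (b * b) + 2)
     + (2 * (u * u) * (c * c) + 2) + (2 * (u * u) * (d * d) + 2)) by ring.
  change 8%nat with (2 + 2 + 2 + 2)%nat.
  repeat apply sum_sq_C_add; apply sum_sq_C_u2_sq, Hu.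
Qed.

Lemma sum_sq_C_28 u N : 2 <= u -> 0 <= N -> sum_sq_C u 28 N.
Proof.
  intros Hu HN. destruct (Z_lt_le_dec N (4 * (u * u))) as [Hs|Hb].
  - apply (sum_sq_C_le u 20); [lia | apply sum_sq_C_lt; lia].
  - assert (HD : 0 < 2 * (u * u)) by nia.
    pose proof (Z.div_mod (N - 8) (2 * (u * u)) ltac:(lia)) as Ediv.
    pose proof (Z.mod_pos_bound (N - 8) (2 * (u * u)) HD) as Emod.
    replace N with (2 * (u * u) * ((N - 8) / (2 * (u * u))) + 8 + (N - 8) mod (2 * (u * u)))
      by lia.
    apply (sum_sq_C_add u 8 20).
    + apply sum_sq_C_u2_mul; [exact Hu|]. apply Z.div_pos; nia.
    + apply sum_sq_C_lt; lia.
Qed.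

Theorem theorem2p3 (u : Z) (hu : 2 <= u) (N : Z) (hN : 0 <= N) :
  exists l : list Z,
    (length l <= 5940)%nat /\ Forall (C u) l /\ sum_sq l = N.
Proof.
  apply (sum_sq_C_le u 28); [now apply Nat.leb_le | now apply sum_sq_C_28].
Qed.
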